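(* Let $\rho$ be a geometric Nielsen 1-chain and let $p_0,p_1,\dots,p_m$ ($m\ge1$) be an edge-path in $T_\rho$ with $p_0=p_m$. Then either $p_j=p_k$ for some distinct indices $0\le j,k<m$, or there exists an orientation on this edge-path.
   Context: Setup: $\mathbb F$ finitely generated free, $\Gamma$ finite connected graph with $\pi_1(\Gamma)\cong\mathbb F$, $H\subset\Gamma$ a subgraph, $f$ a homotopy equivalence with $f(H)\subseteq H$ and fixed lift $\tilde f$ to the universal cover $\widetilde\Gamma$ ($\mathbb F$ acting by deck transformations), $\widetilde H$ the preimage of $H$. 1-chains $x=\sum_ex_ee$ (reversing an edge's orientation negates its coefficient), $\mathrm{supp}(x)=\{e:x_e\ne0\}$; $\pi_H^\perp$ sets coefficients on edges of $\widetilde H$ to $0$; $[u,v]$ is the 1-chain of the reduced edge-path from vertex $u$ to vertex $v$ (coefficient $\pm1$ on its edges). A geometric Nielsen 1-chain is $\rho=\pi_H^\perp([u,v])$ with $\tilde f(u)=u,\tilde f(v)=v$ such that (GNC1) for distinct $g_1,g_2\in\mathbb F$, $\mathrm{supp}(g_1\rho)\cap\mathrm{supp}(g_2\rho)$ is empty or a single edge; (GNC2) each edge $e\notin\widetilde H$ lies in $\mathrm{supp}(g\rho)$ for exactly two elements $g_1,g_2$, and is the unique edge of $\mathrm{supp}(g_1\rho)\cap\mathrm{supp}(g_2\rho)$; (GNC3) some non-commuting $g_1,g_2$ have $\mathrm{supp}(\rho)\cap\mathrm{supp}(g_i\rho)\ne\emptyset$. The graph $T_\rho$ has vertex set $\mathbb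 F$ and an edge between distinct $g_1,g_2$ iff $\mathrm{supp}(g_1\rho)\cap\mathrm{supp}(g_2\rho)\ne\emptyset$. An edge-path $p_0,\dots,p_m$ is a sequence of vertices with $p_{j-1},p_j$ adjacent. For a closed edge-path ($p_0=p_m$), take indices mod $m$, let $g_j=p_j$, and let $e_j$ be the unique edge in $\mathrm{supp}(g_{j-1}\rho)\cap\mathrm{supp}(g_j\rho)$; then $e_j,e_{j+1}\in\mathrm{supp}(g_j\rho)$. An orientation on the path is a choice, for each index $j$, of an orientation of $e_j$ (choices for different indices are independent) such that $(g_j\rho)_{e_j}=-(g_j\rho)_{e_{j+1}}$ for all $0\le j<m$. *)

From mathcomp Require Import all_boot all_algebra.
Set Implicit Arguments. Unset Strict Implicit. Unset Printing Implicit Defensive.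
Import GRing.Theory.
Local Open Scope ring_scope.

Record group := Group {
  gcar :> Type;
  gmul : gcar -> gcar -> gcar;
  gone : gcar;
  ginv : gcar -> gcar;
  gmulA : forall x y z, gmul x (gmul y z) = gmul (gmul x y) z;
  gmul1 : forall x, gmul gone x = x;
  gmulV : forall x, gmul (ginv x) x = gone }.

Record sgraph := SGraph {
  vert : Type;
  edge : eqType;
  src : edge -> vert;
  rev : edge -> edge;
  revK : forall e, rev (rev e) = e;
  rev_neq : forall e, rev e <> e }.

Definition tgt (X : sgraph) (e : edge X) : vert X := src (rev e).

Fixpoint is_path (X : sgraph) (u : vert X) (p : seq (edge X)) (v : vert X) : Prop :=
  match p with
  | [::] => u = v
  | e :: q => src e = u /\ is_path (tgt e) q v
  end.

Fixpoint reduced (X : sgraph) (p : seq (edge X)) : Prop :=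
  match p with
  | e :: ((e' :: _) as q) => e' <> rev e /\ reduced q
  | _ => True
  end.

Definition is_tree (X : sgraph) : Prop :=
  (forall u v : vert X, exists p, is_path u p v) /\
  (forall (u : vert X) p, is_path u p u -> reduced p -> p = [::]).

Record action (F : group) (X : sgraph) := Action {
  actV : F -> vert X -> vert X;
  actE : F -> edge X -> edge X;
  act_src : forall g e, src (actE g e) = actV g (src e);
  act_rev : forall g e, actE g (rev e) = rev (actE g e);
  actV1 : forall x, actV (gone F) x = x;
  actVM : forall g h x, actV (gmul g h) x = actV g (actV h x);
  actE1 : forall e, actE (gone F) e = e;
  actEM : forall g h e, actE (gmul g h) e = actE g (actE h e) }.

(* F acts as the deck group of the universal cover X -> X/F = Gamma, Gamma finite:
   X is a tree, the action is free (on vertices, and without edge inversions)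
   and cofinite (finitely many orbits of vertices and of edges). *)
Definition deck_action (F : group) (X : sgraph) (A : action F X) : Prop :=
  [/\ is_tree X,
      (forall g x, actV A g x = x -> g = gone F),
      (forall g e, actE A g e <> rev e),
      (exists n (a : 'I_n -> vert X), forall x, exists i g, x = actV A g (a i)) &
      (exists n (a : 'I_n -> edge X), forall e, exists i g, e = actE A g (a i))].

(* preimage tilde H of a subgraph H of Gamma = X/F : an F-invariant subgraph *)
Definition invariant_subgraph (F : group) (X : sgraph) (A : action F X)
    (HV : pred (vert X)) (HE : pred (edge X)) : Prop :=
  [/\ (forall e, HE (rev e) = HE e),
      (forall e, HE e -> HV (src e)),
      (forall g x, HV (actV A g x) = HV x) &
      (forall g e, HE (actE A g e) = HE e)].

(* a lift tilde f of a homotopy equivalence f of Gamma with f(H) <= H: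
   vertices go to vertices, edges to edge-paths, equivariantly with respect to
   the automorphism Phi of F = pi_1(Gamma) induced by f (f is a homotopy
   equivalence iff Phi is an automorphism). *)
Record lift_data (F : group) (X : sgraph) := LiftData {
  lPhi : F -> F;
  lV : vert X -> vert X;
  lE : edge X -> seq (edge X) }.

Definition lift_of_he_preserving_H (F : group) (X : sgraph) (A : action F X)
    (HV : pred (vert X)) (HE : pred (edge X)) (f : lift_data F X) : Prop :=
  (forall g h, lPhi f (gmul g h) = gmul (lPhi f g) (lPhi f h)) /\
  bijective (lPhi f) /\
  (forall e, is_path (lV f (src e)) (lE f e) (lV f (tgt e))) /\
  (forall e, lE f (rev e) = seq.rev (map (@rev X) (lE f e))) /\
  (forall g x, lV f (actV A g x) = actV A (lPhi f g) (lV f x)) /\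
  (forall g e, lE f (actE A g e) = map (actE A (lPhi f g)) (lE f e)) /\
  (forall x, HV x -> HV (lV f x)) /\
  (forall e, HE e -> all HE (lE f e)).

(* a 1-chain: coefficient on each oriented edge, x (rev e) = - x e *)
Definition chain (X : sgraph) := edge X -> int.

(* the chain of an edge-path (for a reduced path in a tree: [u,v]) *)
Definition path_chain (X : sgraph) (p : seq (edge X)) : chain X :=
  fun e => \sum_(d <- p) ((if e == d then 1 else 0) - (if e == rev d then 1 else 0)).

Definition proj_perp (X : sgraph) (HE : pred (edge X)) (x : chain X) : chain X :=
  fun e => if HE e then 0 else x e.

Definition gchain (F : group) (X : sgraph) (A : action F X) (g : F) (x : chain X)
  : chain X := fun e => x (actE A (ginv g) e).

Definition supp (X : sgraph) (x : chain X) (e : edge X) : bool := x e != 0.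

Definition same_edge (X : sgraph) (e e' : edge X) : Prop := e' = e \/ e' = rev e.

Definition GNC1 (F : group) (X : sgraph) (A : action F X) (rho : chain X) : Prop :=
  forall g1 g2 : F, g1 <> g2 ->
    (forall e, ~ (supp (gchain A g1 rho) e /\ supp (gchain A g2 rho) e)) \/
    (exists e, [/\ supp (gchain A g1 rho) e, supp (gchain A g2 rho) e &
       forall e', supp (gchain A g1 rho) e' -> supp (gchain A g2 rho) e' ->
                  same_edge e e']).

Definition GNC2 (F : group) (X : sgraph) (A : action F X) (HE : pred (edge X))
    (rho : chain X) : Prop :=
  forall e, ~~ HE e ->
    exists g1 g2 : F, [/\ g1 <> g2, supp (gchain A g1 rho) e, supp (gchain A g2 rho) e,
      (forall g, supp (gchain A g rho) e -> g = g1 \/ g = g2) &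
      (forall e', supp (gchain A g1 rho) e' -> supp (gchain A g2 rho) e' ->
                  same_edge e e')].

Definition GNC3 (F : group) (X : sgraph) (A : action F X) (rho : chain X) : Prop :=
  exists g1 g2 : F, [/\ gmul g1 g2 <> gmul g2 g1,
    (exists e, supp rho e /\ supp (gchain A g1 rho) e) &
    (exists e, supp rho e /\ supp (gchain A g2 rho) e)].

Definition geometric_nielsen (F : group) (X : sgraph) (A : action F X)
    (HE : pred (edge X)) (f : lift_data F X) (rho : chain X) : Prop :=
  exists (u v : vert X) (p : seq (edge X)),
    lV f u = u /\ lV f v = v /\ is_path u p v /\ reduced p /\
    rho = proj_perp HE (path_chain p) /\
    GNC1 A rho /\ GNC2 A HE rho /\ GNC3 A rho.

Definition T_adj (F : group) (X : sgraph) (A : action F X) (rho : chain X)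
    (g1 g2 : F) : Prop :=
  g1 <> g2 /\ exists e, supp (gchain A g1 rho) e /\ supp (gchain A g2 rho) e.

Definition T_edge_path (F : group) (X : sgraph) (A : action F X) (rho : chain X)
    (p : nat -> F) (m : nat) : Prop :=
  forall j, (1 <= j <= m)%N -> T_adj A rho (p j.-1) (p j).

(* an orientation on a closed edge-path (p 0 = p m): for each index j (mod m,
   index 0 identified with index m) an oriented representative eps j of the
   edge e_j in supp(g_{j-1} rho) /\ supp(g_j rho), such that
   (g_j rho)_{e_j} = - (g_j rho)_{e_{j+1}} for 0 <= j < m. *)
Definition orientation (F : group) (X : sgraph) (A : action F X) (rho : chain X)
    (p : nat -> F) (m : nat) : Prop :=
  exists eps : nat -> edge X,
    [/\ eps 0%N = eps m,
        (forall j, (1 <= j <= m)%N ->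
           supp (gchain A (p j.-1) rho) (eps j) /\ supp (gchain A (p j) rho) (eps j)) &
        (forall j, (j < m)%N ->
           gchain A (p j) rho (eps j) = - gchain A (p j) rho (eps j.+1))].

From Pilot Require Import Defs.
From mathcomp Require Import all_boot all_algebra.
From mathcomp Require Import zify.
From Stdlib Require Import ClassicalEpsilon Classical.
Set Implicit Arguments. Unset Strict Implicit. Unset Printing Implicit Defensive.
Import GRing.Theory.
Local Open Scope ring_scope.

(* The universal cover is a tree X, and rho = pi_H^perp [u,v] is the chain of a
   reduced path P with the edges of tilde H removed, so the translate g rho is
   carried by the reduced path gP.  In a tree, [side e w] (0 or 1) tells whether
   the vertex w lies beyond the edge e; the chain of a path from a to b takes the
   value side e b - side e a on e, a reduced path crosses every edge at most
   once, and a path crossing two edges e, f, each lying beyond the other, crosses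
   them in opposite directions ([opposite_coefs]).

   For a walk without repetitions and m >= 3, extend it periodically to q_i and
   let e_i be an edge shared by q_i rho and q_(i+1) rho, oriented so that
   q_(i+2) u lies beyond it.  By GNC2 no other translate crosses e_i; consecutive
   translates share an edge, so all translates other than q_i, q_(i+1) lie on
   one side of e_i.  Hence e_(i+1) lies beyond e_i and e_i lies beyond e_(i+1),
   and [opposite_coefs] on the path q_(i+1) P gives the orientation condition.
   The cases m = 1 (impossible) and m = 2 (take e and its reverse) are direct. *)

(* Edge reversal of a graph; the name [rev] alone would clash with [seq.rev]. *)
Notation erev := Defs.rev.

Section Paths.
Variable X : sgraph.
Implicit Types (e d : edge X) (l : seq (edge X)).

Lemma tgt_rev e : tgt (erev e) = src e.
Proof. by rewrite /tgt Defs.revK. Qed.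

Lemma erev_inj : injective (@erev X).
Proof. exact: can_inj (@Defs.revK X). Qed.

Lemma eq_erev e d : (erev e == d) = (e == erev d).
Proof. by apply/eqP/eqP => [<-|->]; rewrite Defs.revK. Qed.

Lemma erev_eq_self e : (erev e == e) = false.
Proof. by apply/eqP; apply: rev_neq. Qed.

Lemma is_path_cat (u w v : vert X) l1 l2 :
  is_path u l1 w -> is_path w l2 v -> is_path u (l1 ++ l2) v.
Proof.
elim: l1 u => [|e l IH] u /=; first by move=> ->.
by case=> -> p1 p2; split=> //; apply: IH p1 p2.
Qed.

Lemma is_path_catE (u v : vert X) l1 l2 :
  is_path u (l1 ++ l2) v -> exists w, is_path u l1 w /\ is_path w l2 v.
Proof.
elim: l1 u => [|e l IH] u /=; first by exists u.
by case=> srce /IH [w [p1 p2]]; exists w.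
Qed.

Definition revp l := seq.rev (map (@erev X) l).

Lemma is_path_revp (u v : vert X) l : is_path u l v -> is_path v (revp l) u.
Proof.
elim: l u => [|e l IH] u /=; first by move=> ->.
case=> srce /IH pl; rewrite /revp map_cons rev_cons -cats1.
by apply: is_path_cat pl _ => /=; rewrite tgt_rev.
Qed.

Lemma reduced_tail e l : reduced (e :: l) -> reduced l.
Proof. by case: l => //= ? ? []. Qed.

Lemma reduced_catr l1 l2 : reduced (l1 ++ l2) -> reduced l2.
Proof. by elim: l1 => //= e l1 IH /reduced_tail. Qed.

Lemma reduced_catl l1 l2 : reduced (l1 ++ l2) -> reduced l1.
Proof. by elim: l1 => //= e [|e' l1] IH //= [ne red]; split=> //; apply: IH. Qed.

End Paths.

Section Chains.
Variable X : sgraph.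
Implicit Types (e d : edge X) (l : seq (edge X)).

Definition edge_coef e d : int :=
  (if e == d then 1 else 0) - (if e == erev d then 1 else 0).

Lemma path_chain_nil e : path_chain [::] e = 0.
Proof. by rewrite /path_chain big_nil. Qed.

Lemma path_chain_cons d l e :
  path_chain (d :: l) e = edge_coef e d + path_chain l e.
Proof. by rewrite /path_chain big_cons. Qed.

Lemma path_chain_cat l1 l2 e :
  path_chain (l1 ++ l2) e = path_chain l1 e + path_chain l2 e.
Proof. by rewrite /path_chain big_cat. Qed.

Lemma edge_coef_revl e d : edge_coef (erev e) d = - edge_coef e d.
Proof.
rewrite /edge_coef eq_erev (inj_eq (@erev_inj X)).
by case: (e == d); case: (e == erev d); rewrite ?subr0 ?sub0r ?opprK ?subrr ?opprB.
Qed.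

Lemma edge_coef_revr e d : edge_coef e (erev d) = - edge_coef e d.
Proof. by rewrite /edge_coef Defs.revK; case: (e == d); case: (e == erev d). Qed.

Lemma edge_coef_self e : edge_coef e e = 1.
Proof.
by rewrite /edge_coef eqxx -eq_erev erev_eq_self subr0.
Qed.

Lemma path_chain_rev l e : path_chain l (erev e) = - path_chain l e.
Proof.
elim: l => [|d l IH]; first by rewrite !path_chain_nil oppr0.
by rewrite !path_chain_cons IH edge_coef_revl (opprD (edge_coef e d)).
Qed.

Lemma path_chain_revp l e : path_chain (revp l) e = - path_chain l e.
Proof.
elim: l => [|d l IH]; first by rewrite /revp /= !path_chain_nil oppr0.
rewrite /revp map_cons rev_cons -cats1 path_chain_cat -/(revp l) IH.
by rewrite !path_chain_cons path_chain_nil edge_coef_revr addr0 (opprD (edge_coef e d)) addrC.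
Qed.

Definition on_edge d : pred (edge X) := fun x => (x == d) || (x == erev d).
Definition crosses l d : bool := has (on_edge d) l.

Lemma on_edgeP d x : on_edge d x -> x = d \/ x = erev d.
Proof. by case/orP=> /eqP ->; [left|right]. Qed.

Lemma on_edge_sym d x : on_edge d x = on_edge x d.
Proof. by rewrite /on_edge (eq_sym x d) -eq_erev (eq_sym (erev x)). Qed.

Lemma on_edge_same d x y : on_edge d x -> on_edge d y -> y = x \/ y = erev x.
Proof. by move=> /on_edgeP [] -> /on_edgeP [] ->; rewrite ?Defs.revK; tauto. Qed.

Lemma edge_coef_off d x : ~~ on_edge d x -> edge_coef d x = 0.
Proof.
rewrite /on_edge negb_or => /andP [nxd nxr]; rewrite /edge_coef eq_sym (negbTE nxd).
by rewrite -eq_erev eq_sym (negbTE nxr) subrr.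
Qed.

Lemma path_chain_off l d : ~~ crosses l d -> path_chain l d = 0.
Proof.
elim: l => [|x l IH]; first by rewrite path_chain_nil.
by rewrite /crosses /= negb_or => /andP [nx nl]; rewrite path_chain_cons edge_coef_off // IH // addr0.
Qed.

Lemma crossing_split l d :
  crosses l d -> exists l1 x l2, l = l1 ++ x :: l2 /\ on_edge d x.
Proof. by case/split_find=> x l1 l2 dx _; exists l1, x, l2; rewrite cat_rcons. Qed.

Lemma path_chain_once l1 x l2 d :
  on_edge d x -> ~~ crosses l1 d -> ~~ crosses l2 d ->
  path_chain (l1 ++ x :: l2) d = if x == d then 1 else -1.
Proof.
move=> /on_edgeP [->|->] n1 n2; rewrite path_chain_cat path_chain_cons.
  by rewrite !path_chain_off // edge_coef_self eqxx add0r addr0.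
by rewrite !path_chain_off // edge_coef_revr edge_coef_self add0r addr0 erev_eq_self.
Qed.

Lemma reduce_path (u v : vert X) l : is_path u l v ->
  exists l', [/\ is_path u l' v, reduced l' & forall e, path_chain l' e = path_chain l e].
Proof.
elim: l u => [|d l IH] u /=; first by move=> ->; exists [::].
case=> srcd /IH [[|d' l'] [pl' red' chain']].
  by exists [:: d]; split=> //= e; rewrite !path_chain_cons -chain'.
have [d'E|d'N] := eqVneq d' (erev d).
  exists l'; split.
  - by move: pl' => /= [_]; rewrite d'E /tgt Defs.revK srcd.
  - exact: reduced_tail red'.
  - move=> e; rewrite path_chain_cons -chain' path_chain_cons d'E edge_coef_revr.
    by rewrite addrA addrN add0r.
exists [:: d, d' & l']; split=> //= [|e]; first by split=> //; apply/eqP.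
by rewrite path_chain_cons chain' path_chain_cons.
Qed.

End Chains.

Section Trees.
Variables (X : sgraph) (T : is_tree X).
Implicit Types (e d x : edge X) (l : seq (edge X)) (a b u v w : vert X).

Lemma closed_path_chain u l : is_path u l u -> forall e, path_chain l e = 0.
Proof.
move=> /reduce_path [l' [pl' red' chain']] e.
by rewrite -chain' ((proj2 T) _ _ pl' red') path_chain_nil.
Qed.

(* [side e v] is the coefficient on [e] of the chain of (any) path from the
   source of [e] to [v]; it is 1 if [v] lies beyond [e] and 0 otherwise, but we
   only need that it vanishes at [src e] and is constant along paths avoiding [e]. *)
Definition side e v : int :=
  path_chain (proj1_sig (constructive_indefinite_description _ (proj1 T (src e) v))) e.

Lemma side_path e v l : is_path (src e) l v -> side e v = path_chain l e.
Proof.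
move=> pl; rewrite /side; case: constructive_indefinite_description => l0 pl0 /=.
have := closed_path_chain (is_path_cat pl0 (is_path_revp pl)) e.
by rewrite path_chain_cat path_chain_revp => /eqP; rewrite subr_eq0 => /eqP.
Qed.

Lemma side_diff e a b l : is_path a l b -> side e b = side e a + path_chain l e.
Proof.
move=> pl; have [l0 pl0] := proj1 T (src e) a.
by rewrite (side_path pl0) (side_path (is_path_cat pl0 pl)) path_chain_cat.
Qed.

Lemma side_src e : side e (src e) = 0.
Proof. by rewrite (@side_path e _ [::]) ?path_chain_nil. Qed.

Lemma side_tgt e : side e (tgt e) = 1.
Proof.
by rewrite (@side_path e _ [:: e]) ?path_chain_cons ?path_chain_nil ?edge_coef_self ?addr0.
Qed.

Lemma side_rev e v : side (erev e) v = 1 - side e v.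
Proof.
have [l pl] := proj1 T (tgt e) v.
rewrite (@side_path (erev e) _ l pl) path_chain_rev (side_diff e pl) side_tgt.
by rewrite opprD addrA subrr add0r.
Qed.

Lemma side_off_path e a b l : is_path a l b -> ~~ crosses l e -> side e b = side e a.
Proof. by move=> pl ne; rewrite (side_diff e pl) path_chain_off ?addr0. Qed.

Lemma side_crossed e a b l d : is_path a l b -> ~~ crosses l e -> crosses l d ->
  side e (src d) = side e a /\ side e (tgt d) = side e a.
Proof.
move=> pl ne /crossing_split [l1 [x [l2 [El dx]]]].
have [w [p1 /= [srcx _]]] : exists w, is_path a l1 w /\ is_path w (x :: l2) b.
  by apply: is_path_catE; rewrite -El.
have ne1 : ~~ crosses (l1 ++ [:: x]) e.
  by apply: contra ne; rewrite El /crosses !has_cat /= orbF => /orP [] ->; rewrite ?orbT.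
have sx : side e (src x) = side e a.
  by rewrite srcx; apply: side_off_path p1 _; apply: contra ne1; rewrite /crosses has_cat => ->.
have tx : side e (tgt x) = side e a.
  by apply: side_off_path (is_path_cat p1 (_ : is_path w [:: x] (tgt x))) ne1.
by case/on_edgeP: dx => xE; move: sx tx; rewrite xE ?tgt_rev.
Qed.

Lemma no_recrossing_after u v l1 x l2 d :
  is_path u (l1 ++ x :: l2) v -> reduced (l1 ++ x :: l2) -> on_edge d x ->
  ~~ crosses l2 d.
Proof.
move=> pl red dx; apply/negP => /crossing_split [l3 [y [l4 [l2E dy]]]]; subst l2.
have Ecat : l1 ++ x :: l3 ++ y :: l4 = l1 ++ (x :: l3 ++ [:: y]) ++ l4.
  by rewrite cat_cons -catA.
rewrite Ecat in pl red.
have {}red : reduced (x :: l3 ++ [:: y]) by exact: reduced_catl (reduced_catr red).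
have [_ [_ /is_path_catE [w [/= [_ p3y] _]]]] := is_path_catE pl.
have [w' [p3 /= [srcy tgty]]] := is_path_catE p3y.
case: (on_edge_same dx dy) => yE.
- have cycle : is_path (tgt x) (l3 ++ [:: y]) (tgt x) by rewrite -{2}yE tgty.
  by have := proj2 T _ _ cycle (reduced_tail red); case: (l3).
- have cycle : is_path (tgt x) l3 (tgt x) by rewrite [X in is_path _ _ X]/tgt -yE srcy.
  have l3E := proj2 T _ _ cycle (reduced_catl (reduced_tail red)).
  by move: red; rewrite l3E yE /= => [[]].
Qed.

Lemma reduced_crosses_once u v l1 x l2 d :
  is_path u (l1 ++ x :: l2) v -> reduced (l1 ++ x :: l2) -> on_edge d x ->
  ~~ crosses l1 d /\ ~~ crosses l2 d.
Proof.
move=> pl red dx; split; last exact: no_recrossing_after pl red dx.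
apply/negP => /crossing_split [k1 [y [k2 [l1E dy]]]].
have Ecat : l1 ++ x :: l2 = k1 ++ y :: (k2 ++ x :: l2) by rewrite l1E -catA.
rewrite Ecat in pl red.
have /negP := no_recrossing_after pl red dy; apply.
by rewrite /crosses has_cat /= dx orbT.
Qed.

Lemma path_chain_crossed u v l d :
  is_path u l v -> reduced l -> crosses l d -> path_chain l d != 0.
Proof.
move=> pl red /crossing_split [l1 [x [l2 [lE dx]]]]; subst l.
have [n1 n2] := reduced_crosses_once pl red dx.
by rewrite path_chain_once //; case: (x == d).
Qed.

Lemma opposite_coefs_ordered a b l1 x l2 e f :
  is_path a (l1 ++ x :: l2) b -> reduced (l1 ++ x :: l2) -> on_edge e x ->
  crosses l2 f -> side e (src f) != 0 -> side f (tgt e) != 0 ->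
  path_chain (l1 ++ x :: l2) e = - path_chain (l1 ++ x :: l2) f.
Proof.
move=> pl red ex cf ef fe.
have [n1 n2] := reduced_crosses_once pl red ex.
have [w [_ /= [_ p2]]] := is_path_catE pl.
have xE : x = e.
  have [sf _] := side_crossed p2 n2 cf.
  by case/on_edgeP: ex => // xE; move: ef; rewrite sf xE tgt_rev side_src eqxx.
subst x; have ce : path_chain (l1 ++ e :: l2) e = 1 by rewrite path_chain_once ?eqxx.
have [k1 [y [k2 [l2E fy]]]] := crossing_split cf.
have Ecat : l1 ++ e :: l2 = (l1 ++ e :: k1) ++ y :: k2 by rewrite l2E -catA.
rewrite Ecat in pl red ce *.
have [m1 m2] := reduced_crosses_once pl red fy.
have yE : y = erev f.
  have [w' [pk1 /= [srcy _]]] : exists w', is_path (tgt e) k1 w' /\ is_path w' (y :: k2) b.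
    by apply: is_path_catE; rewrite -l2E.
  have nk1 : ~~ crosses k1 f by apply: contra m1; rewrite /crosses has_cat /= => ->; rewrite !orbT.
  case/on_edgeP: fy => // yE; move: fe.
  by rewrite -(side_off_path pk1 nk1) -srcy yE side_src eqxx.
by rewrite ce path_chain_once // yE erev_eq_self opprK.
Qed.

Lemma opposite_coefs a b l e f :
  is_path a l b -> reduced l -> crosses l e -> crosses l f ->
  side e (src f) != 0 -> side e (tgt f) != 0 ->
  side f (src e) != 0 -> side f (tgt e) != 0 ->
  path_chain l e = - path_chain l f.
Proof.
move=> pl red ce cf esf etf fse fte.
have [l1 [x [l2 [lE ex]]]] := crossing_split ce; subst l.
have [cf2|ncf2] := boolP (crosses l2 f); first exact: opposite_coefs_ordered pl red ex cf2 esf fte.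
have nfx : ~~ on_edge f x.
  apply/negP => fx; have [fE|fE] : f = e \/ f = erev e.
    by apply: (on_edge_same (d := x)); rewrite on_edge_sym.
  - by move: fse; rewrite fE side_src eqxx.
  - by move: fte; rewrite fE /tgt side_src eqxx.
have cf1 : crosses l1 f.
  by move: ncf2 nfx cf; rewrite /crosses has_cat /= => /negbTE -> /negbTE ->; rewrite !orbF.
have [k1 [y [k2 [l1E fy]]]] := crossing_split cf1.
have Ecat : l1 ++ x :: l2 = k1 ++ y :: (k2 ++ x :: l2) by rewrite l1E -catA.
rewrite Ecat in pl red *.
have cek : crosses (k2 ++ x :: l2) e by rewrite /crosses has_cat /= ex orbT.
by rewrite (opposite_coefs_ordered pl red fy cek fse etf) opprK.
Qed.

End Trees.

(* The right inverse law, derived from the left-handed group axioms of [group]. *)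
Lemma gmulVr (F : group) (g : F) : gmul g (ginv g) = gone F.
Proof.
set h := ginv g.
have hgh : gmul h (gmul g h) = h by rewrite gmulA gmulV gmul1.
by rewrite -[gmul g h]gmul1 -(gmulV h) -gmulA hgh gmulV.
Qed.

Section ActionsOnChains.
Variables (F : group) (X : sgraph) (A : action F X).
Implicit Types (g : F) (e : edge X) (l : seq (edge X)).

Lemma actEK (g : F) : cancel (actE A g) (actE A (ginv g)).
Proof. by move=> e; rewrite -actEM gmulV actE1. Qed.

Lemma actEVK (g : F) : cancel (actE A (ginv g)) (actE A g).
Proof. by move=> e; rewrite -actEM gmulVr actE1. Qed.

Lemma eq_actEV (g : F) (e d : edge X) :
  (actE A (ginv g) e == d) = (e == actE A g d).
Proof. by apply/eqP/eqP => [<-|->]; rewrite ?actEK ?actEVK. Qed.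

Lemma is_path_act g (u v : vert X) l :
  is_path u l v -> is_path (actV A g u) (map (actE A g) l) (actV A g v).
Proof.
elim: l u => [|e l IH] u /=; first by move=> ->.
by case=> srce /IH pl; rewrite act_src srce /tgt -act_rev act_src.
Qed.

Lemma reduced_act g l : reduced l -> reduced (map (actE A g) l).
Proof.
elim: l => //= e [|e' l] IH //= [ne' red]; split; last exact: IH.
by rewrite -act_rev => /(can_inj (actEK g)).
Qed.

(* Antisymmetric 1-chains, i.e. genuine chains on unoriented edges; their
   translates are again antisymmetric. *)
Definition antisym_chain (rho : chain X) : Prop := forall e, rho (erev e) = - rho e.

Lemma gchain_antisym g rho : antisym_chain rho -> antisym_chain (gchain A g rho).
Proof. by move=> anti e; rewrite /gchain act_rev anti. Qed.

Variables (HV : pred (vert X)) (HE : pred (edge X)).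
Hypothesis Hinv : invariant_subgraph A HV HE.

Lemma proj_perp_antisym l : antisym_chain (proj_perp HE (path_chain l)).
Proof.
case: Hinv => HE_rev _ _ _ e; rewrite /proj_perp HE_rev.
by case: (HE e); rewrite ?oppr0 ?path_chain_rev.
Qed.

Lemma gchain_proj_perp g l e :
  gchain A g (proj_perp HE (path_chain l)) e =
  if HE e then 0 else path_chain (map (actE A g) l) e.
Proof.
case: Hinv => _ _ _ HE_act; rewrite /gchain /proj_perp HE_act.
case: (HE e) => //; rewrite /path_chain big_map; apply: eq_bigr => d _.
by rewrite /edge_coef !eq_actEV act_rev.
Qed.

End ActionsOnChains.

Section Translates.
Variables (F : group) (X : sgraph) (A : action F X).
Variables (HV : pred (vert X)) (HE : pred (edge X)).
Hypotheses (T : is_tree X) (Hinv : invariant_subgraph A HV HE).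
Variables (u v : vert X) (P : seq (edge X)).
Hypotheses (HP : is_path u P v) (HR : reduced P).
Implicit Types (g h : F) (e : edge X).

Local Notation rho := (proj_perp HE (path_chain P)).
Local Notation tP g := (map (actE A g) P).
Local Notation trho g := (gchain A g rho).

Lemma supp_translate g e : supp (trho g) e = ~~ HE e && crosses (tP g) e.
Proof.
rewrite /supp (gchain_proj_perp Hinv); case: (HE e) => //=.
apply/idP/idP => [|ce]; first by apply: contraTT => /path_chain_off ->.
exact: (path_chain_crossed T (is_path_act A g HP) (reduced_act A g HR) ce).
Qed.

Lemma supp_translate_rev g e : supp (trho g) (erev e) = supp (trho g) e.
Proof. by rewrite /supp (gchain_antisym A g (proj_perp_antisym Hinv P)) oppr_eq0. Qed.

Lemma linked_translates_side g h e :
  (exists d, supp (trho g) d /\ supp (trho h) d) ->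
  ~~ crosses (tP g) e -> ~~ crosses (tP h) e ->
  side T e (actV A g u) = side T e (actV A h u).
Proof.
case=> d []; rewrite !supp_translate => /andP [_ cg] /andP [_ ch] ng nh.
have [<- _] := side_crossed T (is_path_act A g HP) ng cg.
by have [<- _] := side_crossed T (is_path_act A h HP) nh ch.
Qed.

Hypothesis G2 : GNC2 A HE rho.

Lemma third_translate_avoids g0 g1 g e :
  supp (trho g0) e -> supp (trho g1) e ->
  g0 <> g1 -> g <> g0 -> g <> g1 -> ~~ crosses (tP g) e.
Proof.
move=> s0 s1 n01 n0 n1; apply/negP => cg.
have nHe : ~~ HE e by move: s0; rewrite supp_translate => /andP [].
have [g1' [g2' [_ _ _ only_two _]]] := G2 nHe.
have sg : supp (trho g) e by rewrite supp_translate nHe.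
case: (only_two _ s0) (only_two _ s1) (only_two _ sg); clear -n01 n0 n1; intuition congruence.
Qed.

Section Cycle.
Variables (q : nat -> F) (m : nat).
Hypotheses (m_ge3 : (3 <= m)%N) (q_periodic : forall i, q (i + m)%N = q i).
Hypothesis q_adj : forall i, T_adj A rho (q i) (q i.+1).
Hypothesis q_uniq : forall i j, (i < j < i + m)%N -> q j <> q i.

Lemma edge_inhabited : inhabited (edge X).
Proof. by case: (q_adj 0) => _ [e _]; constructor. Qed.

Definition common_edge g h : edge X :=
  epsilon edge_inhabited (fun e => supp (trho g) e /\ supp (trho h) e).

(* e_i := the common edge of q_i and q_(i+1), oriented so that q_(i+2) u lies
   beyond it. *)
Definition cycle_edge i : edge X :=
  let e := common_edge (q i) (q i.+1) in
  if side T e (actV A (q i.+2) u) == 0 then erev e else e.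

Lemma cycle_edge_periodic i : cycle_edge (i + m) = cycle_edge i.
Proof. by rewrite /cycle_edge -!addSn !q_periodic. Qed.

Lemma cycle_edge_supp i :
  supp (trho (q i)) (cycle_edge i) /\ supp (trho (q i.+1)) (cycle_edge i).
Proof.
have [] := epsilon_spec edge_inhabited _ (proj2 (q_adj i)).
by rewrite /cycle_edge; case: ifP; rewrite ?supp_translate_rev.
Qed.

Lemma cycle_edge_side i : side T (cycle_edge i) (actV A (q i.+2) u) != 0.
Proof.
rewrite /cycle_edge; case: ifP => [/eqP side0|/negbT //].
by rewrite side_rev side0 subr0 oner_eq0.
Qed.

Lemma cycle_edge_avoided i k :
  (i.+1 < k < i + m)%N -> ~~ crosses (tP (q k)) (cycle_edge i).
Proof.
move=> k_range; have [s0 s1] := cycle_edge_supp i.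
by apply: (third_translate_avoids s0 s1); [move/esym|..]; apply: q_uniq; lia.
Qed.

(* Going around the cycle from q_(i+2), the translates q_k (k < i + m) are
   linked by common edges and all avoid e_i, so they lie on the same side. *)
Lemma far_translates_side i k : (i.+1 < k < i + m)%N ->
  side T (cycle_edge i) (actV A (q k) u) = side T (cycle_edge i) (actV A (q i.+2) u).
Proof.
elim: k => // k IH k_range; have [->|k_ne] := eqVneq k i.+1; first by [].
rewrite -IH; last by lia.
apply/esym/linked_translates_side; first exact: (q_adj k).2.
all: by apply: cycle_edge_avoided; lia.
Qed.

Lemma cycle_edges_opposite i :
  trho (q i.+1) (cycle_edge i) = - trho (q i.+1) (cycle_edge i.+1).
Proof.
have [se0 se1] := cycle_edge_supp i; have [sf1 sf2] := cycle_edge_supp i.+1.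
move: se1 sf1 sf2; rewrite !supp_translate => /andP [nHe ce1] /andP [nHf cf1] /andP [_ cf2].
have ce0 : crosses (tP (q (i + m))) (cycle_edge i).
  by move: se0; rewrite q_periodic supp_translate => /andP [].
have e_avoided : ~~ crosses (tP (q i.+2)) (cycle_edge i) by apply: cycle_edge_avoided; lia.
have f_avoided : ~~ crosses (tP (q (i + m))) (cycle_edge i.+1).
  by apply: cycle_edge_avoided; lia.
(* e_(i+1) is crossed by q_(i+2) P, which avoids e_i: e_(i+1) lies beyond e_i. *)
have [esf etf] := side_crossed T (is_path_act A _ HP) e_avoided cf2.
(* e_i is crossed by q_(i+m) P = q_i P, which avoids e_(i+1): e_i lies beyond
   e_(i+1), since q_(i+m) u lies on the same side as q_(i+3) u. *)
have [fse fte] := side_crossed T (is_path_act A _ HP) f_avoided ce0.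
have far : side T (cycle_edge i.+1) (actV A (q (i + m)) u) != 0.
  by rewrite far_translates_side ?cycle_edge_side //; lia.
rewrite !(gchain_proj_perp Hinv) (negbTE nHe) (negbTE nHf).
apply: (opposite_coefs (is_path_act A _ HP) (reduced_act A _ HR) ce1 cf1).
- by rewrite esf cycle_edge_side.
- by rewrite etf cycle_edge_side.
- by rewrite fse.
- by rewrite fte.
Qed.

(* Reading off e_j := (the edge shared by q_(j-1), q_j) gives an orientation. *)
Lemma cycle_orientation : orientation A rho q m.
Proof.
exists (fun j => cycle_edge (j + m).-1); split.
- by rewrite add0n (_ : (m + m).-1 = m.-1 + m)%N ?cycle_edge_periodic //; lia.
- move=> j /andP [j_gt0 _]; rewrite (_ : (j + m).-1 = j.-1 + m)%N; last by lia.
  by have := cycle_edge_supp (j.-1 + m); rewrite -addSn prednK // !q_periodic.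
- move=> j _; have := cycle_edges_opposite (j + m).-1.
  by rewrite prednK ?q_periodic ?addSn //; lia.
Qed.

End Cycle.
End Translates.

Section CyclicExtension.
Variables (G : Type) (p : nat -> G) (m : nat).
Hypotheses (m_gt0 : (0 < m)%N) (p_closed : p 0%N = p m).

Definition cyclic_ext (i : nat) : G := p (i %% m).

Lemma cyclic_extE j : (j <= m)%N -> cyclic_ext j = p j.
Proof.
rewrite /cyclic_ext leq_eqVlt => /orP [/eqP ->|j_lt]; last by rewrite modn_small.
by rewrite modnn.
Qed.

Lemma cyclic_ext_periodic i : cyclic_ext (i + m) = cyclic_ext i.
Proof. by rewrite /cyclic_ext modnDr. Qed.

Lemma cyclic_ext_adj (R : G -> G -> Prop) :
  (forall j, (1 <= j <= m)%N -> R (p j.-1) (p j)) ->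
  forall i, R (cyclic_ext i) (cyclic_ext i.+1).
Proof.
move=> walk i; have i_lt : (i %% m < m)%N by rewrite ltn_pmod.
have /= step := walk (i %% m).+1 i_lt; rewrite /cyclic_ext.
have -> : (i.+1 %% m = (i %% m).+1 %% m)%N by rewrite -addn1 -modnDml addn1.
have [lt|eq] : ((i %% m).+1 < m \/ (i %% m).+1 = m)%N by lia.
- by rewrite (modn_small lt).
- by move: step; rewrite eq modnn p_closed.
Qed.

Lemma cyclic_ext_uniq :
  ~ (exists j k, [/\ (j < m)%N, (k < m)%N, j <> k & p j = p k]) ->
  forall i j, (i < j < i + m)%N -> cyclic_ext j <> cyclic_ext i.
Proof.
move=> norep i j ij pij; apply: norep; exists (j %% m)%N, (i %% m)%N.
split; rewrite ?ltn_pmod //.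
have -> : j = (i + (j - i))%N by lia.
move=> /eqP; rewrite -{3}[i]addn0 eqn_modDl mod0n modn_small; lia.
Qed.

End CyclicExtension.

Lemma orientation_ext (F : group) (X : sgraph) (A : action F X) (rho : chain X)
    (p p' : nat -> F) (m : nat) :
  (forall j, (j <= m)%N -> p j = p' j) -> orientation A rho p m -> orientation A rho p' m.
Proof.
move=> pp' [eps [eps_closed eps_supp eps_opp]]; exists eps; split=> // j j_range.
- by rewrite -!pp'; [exact: eps_supp | lia ..].
- by rewrite -pp'; [exact: eps_opp | lia].
Qed.

Lemma orientation_two (F : group) (X : sgraph) (A : action F X) (rho : chain X)
    (p : nat -> F) :
  antisym_chain rho -> T_adj A rho (p 0%N) (p 1%N) -> p 0%N = p 2%N ->
  orientation A rho p 2.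
Proof.
move=> anti [_ [d [s0 s1]]] p02.
have supp_rev g : supp (gchain A g rho) (erev d) = supp (gchain A g rho) d.
  by rewrite /supp (gchain_antisym A g anti) oppr_eq0.
exists (fun j => if j == 1%N then d else erev d); split=> //.
- by case=> [|[|[|j]]] //= _; rewrite !supp_rev -p02.
- by case=> [|[|j]] //= _; rewrite (gchain_antisym A _ anti) ?opprK.
Qed.

Theorem lemma5p4 (F : group) (X : sgraph) (A : action F X)
    (HV : pred (vert X)) (HE : pred (edge X)) (f : lift_data F X)
    (rho : chain X) (p : nat -> F) (m : nat) :
  deck_action A ->
  invariant_subgraph A HV HE ->
  lift_of_he_preserving_H A HV HE f ->
  geometric_nielsen A HE f rho ->
  (1 <= m)%N ->
  T_edge_path A rho p m ->
  p 0%N = p m ->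
  (exists j k, [/\ (j < m)%N, (k < m)%N, j <> k & p j = p k]) \/
  orientation A rho p m.
Proof.
move=> [tree _ _ _ _] Hinv _ [u [v [P [_ [_ [HP [HR [-> [_ [G2 _]]]]]]]]]] m_gt0 walk closed.
have [rep|norep] := classic (exists j k, [/\ (j < m)%N, (k < m)%N, j <> k & p j = p k]).
  by left.
right; have adj := cyclic_ext_adj m_gt0 closed walk.
have uniq := cyclic_ext_uniq m_gt0 norep.
case: m m_gt0 walk closed norep adj uniq => [|[|[|m]]] // _ walk closed _ adj uniq.
- by case: (walk 1%N isT); rewrite closed.
- exact: orientation_two (proj_perp_antisym Hinv P) (walk 1%N isT) closed.
- apply: orientation_ext
    (cycle_orientation tree Hinv HP HR G2 _ (cyclic_ext_periodic p _) adj uniq) => // j.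
  exact: cyclic_extE.
Qed.
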